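(* Let $G$ be a finite subgroup of $\mathrm{PGL}_2(\mathbb{Q})$. Then $\mathcal{O}$ is infinite if and only if there exist $a,b\in\mathbb{Q}$ with $a^2\neq b^2$ such that $G$ is a subgroup of $$\left\{I,\ \begin{pmatrix}0&1\\1&0\end{pmatrix},\ \begin{pmatrix}a&b\\-b&-a\end{pmatrix},\ \begin{pmatrix}b&a\\-a&-b\end{pmatrix}\right\}\subset\mathrm{PGL}_2(\mathbb{Q}).$$
   Context: Elements $\sigma=\begin{pmatrix}a&b\\c&d\end{pmatrix}\in\mathrm{PGL}_2(\mathbb{Q})$ (matrices up to nonzero scalars) act on $\hat{\mathbb{C}}=\mathbb{C}\cup\{\infty\}$ as Möbius transformations $\sigma(z)=\frac{az+b}{cz+d}$. $\mathcal{O}$ is the set of those orbits $O$ of $G$ acting on $\hat{\mathbb{C}}$ such that every $z\in O$ satisfies $z=0$ or $|z|=1$. *)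

(* complex numbers modelled as R * R, PGL_2(Q) via rational real matrices. *)
From Stdlib Require Import Reals QArith Qreals List.
Open Scope R_scope.

Definition is_rat (x : R) : Prop := exists q : Q, x = Q2R q.

Record M2 := mkM { ma : R; mb : R; mc : R; md : R }.

Definition ratM (A : M2) : Prop :=
  is_rat (ma A) /\ is_rat (mb A) /\ is_rat (mc A) /\ is_rat (md A).

Definition detM (A : M2) : R := ma A * md A - mb A * mc A.

Definition mulM (A B : M2) : M2 :=
  mkM (ma A * ma B + mb A * mc B) (ma A * mb B + mb A * md B)
      (mc A * ma B + md A * mc B) (mc A * mb B + md A * md B).

Definition scaleM (k : R) (A : M2) : M2 :=
  mkM (k * ma A) (k * mb A) (k * mc A) (k * md A).

Definition idM : M2 := mkM 1 0 0 1.

Definition peq (A B : M2) : Prop := exists k : R, k <> 0 /\ B = scaleM k A.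

(* S is the full preimage in GL_2(Q) of a subgroup of PGL_2(Q) *)
Definition is_PGL2Q_subgroup (S : M2 -> Prop) : Prop :=
  (forall A, S A -> ratM A /\ detM A <> 0) /\
  (forall A B, S A -> ratM B -> peq A B -> S B) /\
  S idM /\
  (forall A B, S A -> S B -> S (mulM A B)) /\
  (forall A, S A -> exists B, S B /\ peq (mulM A B) idM).

Definition PGL_finite (S : M2 -> Prop) : Prop :=
  exists l : list M2, forall A, S A -> exists B, In B l /\ peq A B.

Definition C := (R * R)%type.
Definition Cadd (z w : C) : C := (fst z + fst w, snd z + snd w).
Definition Cmul (z w : C) : C :=
  (fst z * fst w - snd z * snd w, fst z * snd w + snd z * fst w).
Definition Cinv (z : C) : C :=
  let n := fst z * fst z + snd z * snd z in (fst z / n, - snd z / n).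
Definition Cdiv (z w : C) : C := Cmul z (Cinv w).
Definition Cr (x : R) : C := (x, 0).
Definition Cnorm2 (z : C) : R := fst z * fst z + snd z * snd z.

(* Riemann sphere: None = infinity *)
Definition Chat := option C.

(* Moebius action z |-> (az+b)/(cz+d) *)
Definition act (A : M2) (z : Chat) : Chat :=
  match z with
  | None => if Req_EM_T (mc A) 0 then None else Some (Cr (ma A / mc A))
  | Some w =>
      let den := Cadd (Cmul (Cr (mc A)) w) (Cr (md A)) in
      if Req_EM_T (Cnorm2 den) 0 then None
      else Some (Cdiv (Cadd (Cmul (Cr (ma A)) w) (Cr (mb A))) den)
  end.

Definition same_orbit (S : M2 -> Prop) (z w : Chat) : Prop :=
  exists A, S A /\ act A z = w.

(* the orbit of z belongs to the family O: each point is 0 or on the unit circle *)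
Definition good_orbit (S : M2 -> Prop) (z : Chat) : Prop :=
  forall w, same_orbit S z w ->
    exists u : C, w = Some u /\ (u = (0, 0) \/ Cnorm2 u = 1).

(* O is infinite: no finite list of points represents all orbits in O *)
Definition O_infinite (S : M2 -> Prop) : Prop :=
  ~ exists l : list Chat,
      forall z, good_orbit S z -> exists w, In w l /\ same_orbit S w z.

From Stdlib Require Import Reals QArith Qreals List Lra Lia Classical FinFun.
Open Scope R_scope.
Import ListNotations.

(* For z = x + iy on the unit circle, |a z + b|^2 = a^2 + 2abx + b^2 is affine in x.
   Hence for a Moebius map A, the conditions |A z| = 1 and A z = 0 are linear equations
   in x, unless |c z + d| = |a z + b| identically on the circle, i.e. unless A is
   projectively (a b; b a) or (a b; -b -a).  So if O is infinite, every element of G has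
   one of these two shapes.  In a finite group, (a b; b a) must be diagonal or
   antidiagonal: otherwise the ratio (a+b)/(a-b) of its eigenvalues has infinitely many
   distinct powers.  The product of two elements of the second shape has the first shape,
   which makes them proportional up to swapping a and b; this gives the Klein group of the
   statement.  Conversely, all four elements of that group preserve the unit circle, so
   every point of the circle has an orbit in O, and these orbits have at most four
   points each. *)

Lemma Cnorm2_div z w : Cnorm2 w <> 0 -> Cnorm2 (Cdiv z w) = Cnorm2 z / Cnorm2 w.
Proof.
destruct z as [z1 z2], w as [w1 w2]; unfold Cnorm2, Cdiv, Cmul, Cinv; simpl.
intro Hw; field; exact Hw.
Qed.

Lemma Cnorm2_affine_circle a b x y : x*x + y*y = 1 ->
  Cnorm2 (Cadd (Cmul (Cr a) (x, y)) (Cr b)) = a*a + 2*a*b*x + b*b.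
Proof.
intro Hc; unfold Cnorm2, Cadd, Cmul, Cr; simpl.
transitivity (a*a*(x*x + y*y) + 2*a*b*x + b*b); [ring | rewrite Hc; ring].
Qed.

Lemma affine_circle_neq0 a b x y : x*x + y*y = 1 -> a*a <> b*b ->
  a*a + 2*a*b*x + b*b <> 0.
Proof.
intros Hc Hab H.
assert (Hsum : (a + b*x)*(a + b*x) + (b*y)*(b*y) = 0).
{ transitivity (a*a + 2*a*b*x + b*b*(x*x + y*y)); [ring | rewrite Hc; lra]. }
assert (Hre : a + b*x = 0) by nra.
assert (Him : b*y = 0) by nra.
apply Hab; nra.
Qed.

Lemma act_circle_norm A x y v : x*x + y*y = 1 -> act A (Some (x, y)) = Some v ->
  Cnorm2 v * (mc A*mc A + 2*mc A*md A*x + md A*md A)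
    = ma A*ma A + 2*ma A*mb A*x + mb A*mb A.
Proof.
intros Hc; unfold act.
destruct (Req_EM_T _ _) as [E|E]; [discriminate|].
intro Hv; injection Hv as <-.
rewrite Cnorm2_div by exact E.
rewrite !(Cnorm2_affine_circle _ _ _ _ Hc).
rewrite (Cnorm2_affine_circle _ _ _ _ Hc) in E.
field; exact E.
Qed.

Lemma act_unit_circle a b c d x y : x*x + y*y = 1 -> a*a <> b*b ->
  c*c + 2*c*d*x + d*d = a*a + 2*a*b*x + b*b ->
  exists v, act (mkM a b c d) (Some (x, y)) = Some v /\ Cnorm2 v = 1.
Proof.
intros Hc Hab Heq.
pose proof (affine_circle_neq0 a b x y Hc Hab) as HN.
destruct (act (mkM a b c d) (Some (x, y))) as [v|] eqn:Hv.
- exists v; split; [reflexivity|].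
  pose proof (act_circle_norm _ _ _ _ Hc Hv) as Hn; simpl in Hn.
  rewrite Heq in Hn.
  apply (Rmult_eq_reg_r (a*a + 2*a*b*x + b*b)); [rewrite Rmult_1_l; exact Hn | exact HN].
- exfalso; unfold act in Hv; simpl in Hv.
  destruct (Req_EM_T _ _) as [E|E]; [|discriminate].
  rewrite Cnorm2_affine_circle in E by exact Hc.
  apply HN; lra.
Qed.

Lemma act_scale k A z : k <> 0 -> act (scaleM k A) z = act A z.
Proof.
intro Hk; destruct A as [a b c d], z as [[x y]|]; unfold act; simpl.
- assert (Hden : forall u v : R,
    Cnorm2 (Cadd (Cmul (Cr (k*u)) (x, y)) (Cr (k*v)))
      = k*k * Cnorm2 (Cadd (Cmul (Cr u) (x, y)) (Cr v)))
    by (intros; unfold Cnorm2, Cadd, Cmul, Cr; simpl; ring).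
  rewrite Hden.
  destruct (Req_EM_T (Cnorm2 (Cadd (Cmul (Cr c) (x, y)) (Cr d))) 0) as [E|E].
  + rewrite E, Rmult_0_r; destruct (Req_EM_T 0 0); [reflexivity | contradiction].
  + destruct (Req_EM_T _ 0) as [E'|E'].
    * exfalso; apply Rmult_integral in E' as [E'|E']; [|contradiction].
      apply Rmult_integral in E' as [E'|E']; contradiction.
    * f_equal; revert E E'; unfold Cnorm2, Cdiv, Cadd, Cmul, Cinv, Cr; simpl; intros E E'.
      f_equal; field; split; intro Z; first [apply E; lra | apply E'; lra].
- destruct (Req_EM_T (k*c) 0) as [E|E]; destruct (Req_EM_T c 0) as [E'|E']; auto.
  + exfalso; apply Rmult_integral in E as [E|E]; contradiction.
  + exfalso; apply E; rewrite E'; ring.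
  + f_equal; unfold Cr; f_equal; field; split; assumption.
Qed.

Lemma act_peq A B z : peq A B -> act B z = act A z.
Proof. intros [k [Hk ->]]; apply act_scale, Hk. Qed.

Lemma act_id z : act idM z = z.
Proof.
destruct z as [[x y]|]; unfold act, idM; simpl.
- destruct (Req_EM_T _ _) as [E|E].
  + exfalso; unfold Cnorm2, Cadd, Cmul, Cr in E; simpl in E; nra.
  + revert E; unfold Cnorm2, Cdiv, Cadd, Cmul, Cinv, Cr; simpl; intro E.
    f_equal; f_equal; field; exact E.
- destruct (Req_EM_T 0 0); [reflexivity | contradiction].
Qed.

Lemma small_pos_not_in (L : list R) : exists e, 0 < e /\ forall x, 0 < x < e -> ~ In x L.
Proof.
induction L as [|y L [e [He H]]].
- exists 1; split; [lra | intros x _ []].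
- destruct (Rle_lt_dec y 0) as [Hy|Hy].
  + exists e; split; [exact He|]; intros x Hx [E|E]; [lra | exact (H x Hx E)].
  + exists (Rmin e y); split; [apply Rmin_glb_lt; assumption|].
    pose proof (Rmin_l e y); pose proof (Rmin_r e y).
    intros x Hx [E|E]; [lra | apply (H x); [lra | exact E]].
Qed.

Lemma circle_point_not_in (L : list R) : exists x y, x*x + y*y = 1 /\ ~ In x L.
Proof.
destruct (small_pos_not_in L) as [e [He H]].
set (x := Rmin e 1 / 2).
assert (Hx : 0 < x < e /\ x < 1).
{ pose proof (Rmin_l e 1); pose proof (Rmin_r e 1).
  assert (0 < Rmin e 1) by (apply Rmin_glb_lt; lra).
  unfold x; lra. }
exists x, (sqrt (1 - x*x)); split.
- rewrite sqrt_sqrt by nra; ring.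
- apply H; tauto.
Qed.

Definition klein_mats (a b : R) : list M2 :=
  [idM; mkM 0 1 1 0; mkM a b (-b) (-a); mkM b a (-a) (-b)].

Lemma klein_mats_act_circle a b M x y : a*a <> b*b -> In M (klein_mats a b) ->
  x*x + y*y = 1 -> exists v, act M (Some (x, y)) = Some v /\ Cnorm2 v = 1.
Proof.
intros Hab HM Hc; simpl in HM.
destruct HM as [<-|[<-|[<-|[<-|[]]]]]; apply act_unit_circle;
  try assumption; try ring; lra.
Qed.

Lemma O_infinite_of_klein (S : M2 -> Prop) a b : a*a <> b*b ->
  (forall A, S A -> exists M, In M (klein_mats a b) /\ peq A M) -> O_infinite S.
Proof.
intros Hab HS [l Hl].
(* The orbit of w meets the unit circle only at abscissae in [L]. *)
set (L := flat_map (fun w => map (fun M =>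
            match act M w with Some p => fst p | None => 0 end) (klein_mats a b)) l).
destruct (circle_point_not_in L) as [x [y [Hc HxL]]].
assert (Hgood : good_orbit S (Some (x, y))).
{ intros w [A [HA <-]].
  destruct (HS A HA) as [M [HM HAM]].
  rewrite <- (act_peq _ _ _ HAM).
  destruct (klein_mats_act_circle a b M x y Hab HM Hc) as [v [-> Hv]].
  exists v; split; [reflexivity | right; exact Hv]. }
destruct (Hl _ Hgood) as [w [Hw [A [HA Hact]]]].
destruct (HS A HA) as [M [HM HAM]].
apply HxL, in_flat_map; exists w; split; [exact Hw|].
apply in_map_iff; exists M; split; [|exact HM].
rewrite (act_peq _ _ _ HAM), Hact; reflexivity.
Qed.

Lemma circle_preserving_shape a b c d : a*d - b*c <> 0 ->
  a*a + b*b = c*c + d*d -> a*b = c*d -> (c = b /\ d = a) \/ (c = -b /\ d = -a).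
Proof.
intros Hdet E1 E2.
assert (Hp : Rsqr (c + d) = Rsqr (a + b)) by (unfold Rsqr; nra).
assert (Hm : Rsqr (c - d) = Rsqr (a - b)) by (unfold Rsqr; nra).
destruct (Rsqr_eq _ _ Hp), (Rsqr_eq _ _ Hm).
- exfalso; apply Hdet; replace c with a by lra; replace d with b by lra; ring.
- left; lra.
- right; lra.
- exfalso; apply Hdet; replace c with (-a) by lra; replace d with (-b) by lra; ring.
Qed.

Lemma circle_abscissa_cases a b c d x y v : x*x + y*y = 1 -> a*d - b*c <> 0 ->
  ~ (a*a + b*b = c*c + d*d /\ a*b = c*d) ->
  act (mkM a b c d) (Some (x, y)) = Some v -> v = (0, 0) \/ Cnorm2 v = 1 ->
  x = - (a*a + b*b - c*c - d*d) / (2*(a*b - c*d)) \/ x = - (a*a + b*b) / (2*(a*b)).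
Proof.
intros Hc Hdet Hshape Hv Hgood.
pose proof (act_circle_norm _ _ _ _ Hc Hv) as HN; simpl in HN.
destruct Hgood as [->|Hv1].
- right.
  assert (Hnum : a*a + 2*a*b*x + b*b = 0) by (unfold Cnorm2 in HN; simpl in HN; lra).
  assert (Hab : a*b <> 0).
  { intro E; apply Hdet.
    assert (Hsq : a*a + b*b = 0).
    { replace (2*a*b*x) with (2*x*(a*b)) in Hnum by ring; rewrite E in Hnum; lra. }
    assert (a = 0 /\ b = 0) as [-> ->] by (split; nra).
    ring. }
  apply Rmult_neq_0_reg in Hab as [Ha Hb].
  field_simplify_eq; [lra | tauto].
- left; rewrite Hv1, Rmult_1_l in HN.
  assert (Hcoef : a*b - c*d <> 0).
  { intro E; apply Hshape; split; [|lra].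
    replace (2*c*d*x) with (2*x*(c*d)) in HN by ring.
    replace (2*a*b*x) with (2*x*(a*b)) in HN by ring.
    replace (c*d) with (a*b) in HN by lra; lra. }
  field_simplify_eq; [lra | exact Hcoef].
Qed.

Lemma circle_ordinate_cases x y : x*x + y*y = 1 ->
  y = sqrt (1 - x*x) \/ y = - sqrt (1 - x*x).
Proof.
intro Hc; replace (1 - x*x) with (Rsqr y) by (unfold Rsqr; lra).
rewrite sqrt_Rsqr_abs; unfold Rabs; destruct (Rcase_abs y); [right | left]; lra.
Qed.

Lemma O_infinite_elt_shape (S : M2 -> Prop) : is_PGL2Q_subgroup S -> O_infinite S ->
  forall A, S A -> (mc A = mb A /\ md A = ma A) \/ (mc A = - mb A /\ md A = - ma A).
Proof.
intros [Hrat [_ [Hid _]]] Hinf [a b c d] HA; simpl.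
pose proof (proj2 (Hrat _ HA)) as Hdet; unfold detM in Hdet; simpl in Hdet.
destruct (classic (a*a + b*b = c*c + d*d /\ a*b = c*d)) as [[E1 E2]|Hshape].
{ exact (circle_preserving_shape a b c d Hdet E1 E2). }
exfalso; apply Hinf.
set (x1 := - (a*a + b*b - c*c - d*d) / (2*(a*b - c*d))).
set (x2 := - (a*a + b*b) / (2*(a*b))).
exists [Some (0, 0); Some (x1, sqrt (1 - x1*x1)); Some (x1, - sqrt (1 - x1*x1));
        Some (x2, sqrt (1 - x2*x2)); Some (x2, - sqrt (1 - x2*x2))].
intros z Hz.
assert (Hself : same_orbit S z z) by (exists idM; split; [exact Hid | apply act_id]).
exists z; split; [|exact Hself].
destruct (Hz z Hself) as [[x y] [-> [H0|Hc]]]; [rewrite H0; simpl; tauto|].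
unfold Cnorm2 in Hc; simpl in Hc.
destruct (Hz (act (mkM a b c d) (Some (x, y)))) as [v [Hv Hgood]];
  [exists (mkM a b c d); split; [exact HA | reflexivity]|].
destruct (circle_abscissa_cases a b c d x y v Hc Hdet Hshape Hv Hgood) as [-> | ->];
  destruct (circle_ordinate_cases _ _ Hc) as [-> | ->]; simpl; tauto.
Qed.

Fixpoint powM (A : M2) (n : nat) : M2 :=
  match n with O => idM | S n => mulM A (powM A n) end.

Lemma powM_closed (S : M2 -> Prop) A n : is_PGL2Q_subgroup S -> S A -> S (powM A n).
Proof.
intros [_ [_ [Hid [Hmul _]]]] HA.
induction n as [|n IH]; simpl; [exact Hid | exact (Hmul _ _ HA IH)].
Qed.

Lemma powM_sym a b n : exists p q, powM (mkM a b b a) n = mkM p q q p /\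
  p + q = (a + b)^n /\ p - q = (a - b)^n.
Proof.
induction n as [|n [p [q [E [Ep Eq]]]]].
- exists 1, 0; simpl; unfold idM; repeat split; ring.
- exists (a*p + b*q), (a*q + b*p); simpl; rewrite E, <- Ep, <- Eq.
  unfold mulM; simpl; repeat split; [f_equal | ..]; ring.
Qed.

Lemma pow_injective r : r <> 0 -> Rabs r <> 1 -> Injective (pow r).
Proof.
intros Hr0 Hr1.
assert (Hlt : forall i j, (i < j)%nat -> r^i <> r^j).
{ intros i j Hij E.
  replace j with (i + (j - i))%nat in E by lia; rewrite pow_add in E.
  assert (Hpow : r^(j - i) = 1).
  { apply (Rmult_eq_reg_l (r^i)); [rewrite <- E; ring | apply pow_nonzero, Hr0]. }
  destruct (pow_R1 _ _ Hpow); [contradiction | lia]. }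
intros i j E; destruct (Nat.lt_trichotomy i j) as [L|[L|L]]; [| exact L |].
- exfalso; exact (Hlt _ _ L E).
- exfalso; exact (Hlt _ _ L (eq_sym E)).
Qed.

Lemma injective_not_in_list {T : Type} (f : nat -> T) (l : list T) :
  Injective f -> ~ (forall n, In (f n) l).
Proof.
intros Hf Hl.
assert (Hnd : NoDup (map f (seq 0 (S (length l)))))
  by (apply Injective_map_NoDup; [exact Hf | apply seq_NoDup]).
assert (Hincl : incl (map f (seq 0 (S (length l)))) l).
{ intros z Hz; apply in_map_iff in Hz as [n [<- _]]; apply Hl. }
pose proof (NoDup_incl_length Hnd Hincl) as Hlen.
rewrite length_map, length_seq in Hlen; lia.
Qed.

(* The ratio of the eigenvalues a + b and a - b of (a b; b a), a projective invariant. *)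
Definition sym_ratio (M : M2) : R := (ma M + mb M) / (ma M - mb M).

Lemma sym_elt_degenerate (S : M2 -> Prop) a b : is_PGL2Q_subgroup S -> PGL_finite S ->
  S (mkM a b b a) -> a = 0 \/ b = 0.
Proof.
intros HG [l Hl] HA.
destruct (classic (a = 0 \/ b = 0)) as [H|H]; [exact H | exfalso].
pose proof (proj2 (proj1 HG _ HA)) as Hdet; unfold detM in Hdet; simpl in Hdet.
assert (Hp : a + b <> 0) by (intro E; apply Hdet; replace b with (-a) by lra; ring).
assert (Hm : a - b <> 0) by (intro E; apply Hdet; replace b with a by lra; ring).
set (r := (a + b) / (a - b)).
assert (Hr0 : r <> 0) by (apply Rmult_integral_contrapositive_currified; [|apply Rinv_neq_0_compat]; assumption).
assert (Hr1 : Rabs r <> 1).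
{ intro E; unfold Rabs in E; destruct (Rcase_abs r); apply H; unfold r in E;
    field_simplify_eq in E; try assumption; lra. }
apply (injective_not_in_list (pow r) (map sym_ratio l) (pow_injective r Hr0 Hr1)).
intro n; destruct (Hl _ (powM_closed S _ n HG HA)) as [B [HB [k [Hk ->]]]].
apply in_map_iff; exists (scaleM k (powM (mkM a b b a) n)); split; [|exact HB].
destruct (powM_sym a b n) as [p [q [-> [Ep Eq]]]].
assert (Hpq : p - q <> 0) by (rewrite Eq; apply pow_nonzero, Hm).
unfold sym_ratio, r, Rdiv; simpl.
rewrite Rpow_mult_distr, pow_inv, <- Ep, <- Eq.
field; split; [exact Hpq|].
replace (k*p - k*q) with (k*(p - q)) by ring; apply Rmult_integral_contrapositive; tauto.
Qed.

Lemma sym_elt_class (S : M2 -> Prop) a b : is_PGL2Q_subgroup S -> PGL_finite S ->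
  S (mkM a b b a) -> peq (mkM a b b a) idM \/ peq (mkM a b b a) (mkM 0 1 1 0).
Proof.
intros HG Hfin HA.
pose proof (proj2 (proj1 HG _ HA)) as Hdet; unfold detM in Hdet; simpl in Hdet.
destruct (sym_elt_degenerate S a b HG Hfin HA) as [->| ->].
- assert (Hb : b <> 0) by (intro E; apply Hdet; rewrite E; ring).
  right; exists (/b); split; [apply Rinv_neq_0_compat, Hb|].
  unfold scaleM; simpl; f_equal; field; exact Hb.
- assert (Ha : a <> 0) by (intro E; apply Hdet; rewrite E; ring).
  left; exists (/a); split; [apply Rinv_neq_0_compat, Ha|].
  unfold scaleM, idM; simpl; f_equal; field; exact Ha.
Qed.

Lemma proportional_of_det0 a b c d : a*d - b*c = 0 ->
  ~ (a = 0 /\ b = 0) -> ~ (c = 0 /\ d = 0) -> exists k, k <> 0 /\ c = k*a /\ d = k*b.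
Proof.
intros E Hab Hcd; destruct (Req_dec a 0) as [Ha|Ha].
- subst a; assert (Hb : b <> 0) by tauto.
  assert (Hc : c = 0).
  { assert (Hbc : b*c = 0) by lra; apply Rmult_integral in Hbc as [|]; [contradiction | assumption]. }
  subst c; assert (Hd : d <> 0) by tauto.
  exists (d/b); split; [apply Rmult_integral_contrapositive_currified; [|apply Rinv_neq_0_compat]; assumption|].
  split; [ring | field; exact Hb].
- assert (Hc : c <> 0).
  { intro Hc; subst c; apply Hcd; split; [reflexivity|].
    assert (Had : a*d = 0) by lra; apply Rmult_integral in Had as [|]; [contradiction | assumption]. }
  exists (c/a); split; [apply Rmult_integral_contrapositive_currified; [|apply Rinv_neq_0_compat]; assumption|].
  split; [field; exact Ha|].
  apply (Rmult_eq_reg_l a); [field_simplify; [lra | exact Ha] | exact Ha].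
Qed.

Lemma antisym_elts_proportional (S : M2 -> Prop) a b c d :
  is_PGL2Q_subgroup S -> PGL_finite S ->
  S (mkM a b (-b) (-a)) -> S (mkM c d (-d) (-c)) ->
  peq (mkM c d (-d) (-c)) (mkM a b (-b) (-a)) \/
  peq (mkM c d (-d) (-c)) (mkM b a (-a) (-b)).
Proof.
intros HG Hfin HA HB.
pose proof (proj2 (proj1 HG _ HA)) as DA; pose proof (proj2 (proj1 HG _ HB)) as DB.
unfold detM in DA, DB; simpl in DA, DB.
assert (NA : ~ (a = 0 /\ b = 0)) by (intros [-> ->]; apply DA; ring).
assert (NB : ~ (c = 0 /\ d = 0)) by (intros [-> ->]; apply DB; ring).
assert (Hprod : S (mkM (a*c - b*d) (a*d - b*c) (a*d - b*c) (a*c - b*d))).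
{ replace (mkM _ _ _ _) with (mulM (mkM a b (-b) (-a)) (mkM c d (-d) (-c)))
    by (unfold mulM; simpl; f_equal; ring).
  exact (proj1 (proj2 (proj2 (proj2 HG))) _ _ HA HB). }
destruct (sym_elt_degenerate S _ _ HG Hfin Hprod) as [E|E].
- right; destruct (proportional_of_det0 b a c d) as [k [Hk [-> ->]]]; [lra | tauto | exact NB|].
  exists (/k); split; [apply Rinv_neq_0_compat, Hk|].
  unfold scaleM; simpl; f_equal; field; exact Hk.
- left; destruct (proportional_of_det0 a b c d) as [k [Hk [-> ->]]]; [lra | exact NA | exact NB|].
  exists (/k); split; [apply Rinv_neq_0_compat, Hk|].
  unfold scaleM; simpl; f_equal; field; exact Hk.
Qed.

Theorem mainTheorem4 (S : M2 -> Prop) :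
  is_PGL2Q_subgroup S -> PGL_finite S ->
  (O_infinite S <->
   exists a b : R, is_rat a /\ is_rat b /\ a ^ 2 <> b ^ 2 /\
     forall A, S A ->
       peq A idM \/ peq A (mkM 0 1 1 0) \/
       peq A (mkM a b (- b) (- a)) \/ peq A (mkM b a (- a) (- b))).
Proof.
intros HG Hfin; split.
2:{ intros [a [b [_ [_ [Hab HS]]]]].
    apply (O_infinite_of_klein S a b); [intro E; apply Hab; simpl; lra|].
    intros A HA; destruct (HS A HA) as [H|[H|[H|H]]];
      [exists idM | exists (mkM 0 1 1 0) | exists (mkM a b (-b) (-a))
      | exists (mkM b a (-a) (-b))]; split; simpl; tauto. }
intro Hinf.
assert (Hsym : forall c d, S (mkM c d d c) ->
  peq (mkM c d d c) idM \/ peq (mkM c d d c) (mkM 0 1 1 0))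
  by (intros c d; apply sym_elt_class; assumption).
destruct (classic (exists a b, S (mkM a b (-b) (-a)))) as [[a [b H0]]|Hnone].
- destruct (proj1 HG _ H0) as [[Ra [Rb _]] Hdet]; unfold detM in Hdet; simpl in *.
  exists a, b; split; [exact Ra|]; split; [exact Rb|]; split; [intro E; apply Hdet; simpl in E; lra|].
  intros [c d e f] HA.
  destruct (O_infinite_elt_shape S HG Hinf _ HA) as [[He Hf]|[He Hf]]; simpl in He, Hf; subst e f.
  + destruct (Hsym c d HA); tauto.
  + destruct (antisym_elts_proportional S a b c d HG Hfin H0 HA); tauto.
- exists 1, 0; split; [exists 1%Q; unfold Q2R; simpl; field|].
  split; [exists 0%Q; unfold Q2R; simpl; field|]; split; [simpl; lra|].
  intros [c d e f] HA.
  destruct (O_infinite_elt_shape S HG Hinf _ HA) as [[He Hf]|[He Hf]]; simpl in He, Hf; subst e f.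
  + destruct (Hsym c d HA); tauto.
  + exfalso; apply Hnone; exists c, d; exact HA.
Qed.
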